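(* Let $\mathbb{F}$ be a finite field and let $C\subseteq\mathbb{F}^n$ be an $(n,k)$ linear block code with $k\times n$ generator matrix $G$ (rows $\mathbf{g}_1,\dots,\mathbf{g}_k$, columns $\bar{\mathbf{g}}_1,\dots,\bar{\mathbf{g}}_n$) and $(n-k)\times n$ parity-check matrix $H$ (columns $\mathbf{h}_1,\dots,\mathbf{h}_n$). Fix a span list for the rows of $G$ and let $\Theta$ be the associated $k\times(n-k)$ displacement matrix. For $i=0,\dots,n$ let $N_i=G_iH_i^T+\Theta=\sum_{j=1}^{i}\bar{\mathbf{g}}_j\mathbf{h}_j^T+\Theta$ (so $N_n=N_0=\Theta$), and let $\ker(N_i)=\{\mathbf{u}\in\mathbb{F}^k:\mathbf{u}N_i=\mathbf{0}\}$. Let $T_{alg}$ be the tail-biting trellis whose vertices at level $i$ ($0\le i\le n-1$, level $n$ identified with level $0$) are the cosets of $\ker(N_i)$ in $\mathbb{F}^k$ (equivalently, the corresponding sets of codewords $\{\mathbf{u}G\}$), and in which, for $1\le i\le n$, there is an edge labeled $c_i$ from a vertex $v$ at level $i-1$ to a vertex $w$ at level $i$ if and only if there is $\mathbf{u}\in v\cap w$ such that the codeword $\mathbf{c}=\mathbf{u}G=(c_1,\dots,c_n)$ has $i$-th symbol $c_i$. Then $T_{alg}$ is isomorphic to the tail-biting BCJR trellis $T_{(G,H,\Theta)}$.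
   Context: Span of a row $\mathbf{g}=(g_1,\dots,g_n)$ of $G$: either a conventional span $[a,b]$ with $a\le b$, where $a$ and $b$ are the first and last nonzero positions of $\mathbf{g}$, or a circular span $[a,b]$ with $a>b$, meaning $g_a\neq 0$, $g_b\neq0$, and the support of $\mathbf{g}$ is contained in $\{a,a+1,\dots,n\}\cup\{1,\dots,b\}$. The displacement vector of $\mathbf{g}$ is $\mathbf{d}_{g}=\mathbf{0}\in\mathbb{F}^{n-k}$ if its span is conventional and $\mathbf{d}_g=\sum_{j=a}^{n}g_j\mathbf{h}_j^T$ if its span is circular $[a,b]$; the displacement matrix $\Theta$ is the $k\times(n-k)$ matrix whose $l$-th row is $\mathbf{d}_{g_l}$. The tail-biting BCJR trellis $T_{(G,H,\Theta)}$ (Nori–Shankar) has vertex set $V_i=\{\mathbf{u}N_i:\mathbf{u}\in\mathbb{F}^k\}\subseteq\mathbb{F}^{n-k}$ at level $i$, $0\le i\le n-1$ (level $n$ identified with level $0$), and for $1\le i\le n$ edge set $E_i=\{(\mathbf{u}N_{i-1},\ \mathbf{u}\bar{\mathbf{g}}_i,\ \mathbf{u}N_i):\mathbf{u}\in\mathbb{F}^k\}$, i.e. an edge from $\mathbf{u}N_{i-1}$ to $\mathbf{u}N_i$ labeled $\mathbf{u}\bar{\mathbf{g}}_i$. Two tail-biting trellises are isomorphic if there are bijections between their vertex sets at each level that map edges to edges and preserve edge labels. *)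

From HB Require Import structures.
From mathcomp Require Import all_boot all_order all_algebra.
Set Implicit Arguments. Unset Strict Implicit. Unset Printing Implicit Defensive.
Import GRing.Theory.
Local Open Scope ring_scope.

(* Indices are 0-based: paper position j (1..n) is our j-1 (0..n-1). *)

Section Trellis.
Variables (F : finFieldType) (k n : nat).

Definition is_span (g : 'rV[F]_n) (ab : 'I_n * 'I_n) : Prop :=
  let a := ab.1 in let b := ab.2 in
  if (a <= b)%N then
    [/\ g 0 a != 0, g 0 b != 0 &
        forall j : 'I_n, g 0 j != 0 -> (a <= j <= b)%N]
  else
    [/\ g 0 a != 0, g 0 b != 0 &
        forall j : 'I_n, g 0 j != 0 -> (a <= j)%N || (j <= b)%N].

Definition displacement (H : 'M[F]_(n - k, n)) (g : 'rV[F]_n)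
    (ab : 'I_n * 'I_n) : 'rV[F]_(n - k) :=
  if (ab.1 <= ab.2)%N then 0
  else \sum_(j < n | (ab.1 <= j)%N) g 0 j *: (col j H)^T.

Definition disp_matrix (G : 'M[F]_(k, n)) (H : 'M[F]_(n - k, n))
    (spans : 'I_k -> 'I_n * 'I_n) : 'M[F]_(k, n - k) :=
  \matrix_(l < k) displacement H (row l G) (spans l).

Definition Nmat (G : 'M[F]_(k, n)) (H : 'M[F]_(n - k, n))
    (Theta : 'M[F]_(k, n - k)) (i : nat) : 'M[F]_(k, n - k) :=
  \sum_(j < n | (j < i)%N) (col j G *m (col j H)^T) + Theta.

Definition kerN (M : 'M[F]_(k, n - k)) : {set 'rV[F]_k} :=
  [set x : 'rV[F]_k | x *m M == 0].
Definition kcoset (M : 'M[F]_(k, n - k)) (u : 'rV[F]_k) : {set 'rV[F]_k} :=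
  [set u + x | x in kerN M].

(* T_alg: vertices at level i are the cosets of ker(N_i); edge j (paper j+1)
   goes from level j to level j+1 (level n identified with level 0). *)
Definition Talg_V G H Theta (i : nat) : {set {set 'rV[F]_k}} :=
  [set kcoset (Nmat G H Theta i) u | u : 'rV[F]_k].
Definition Talg_E G H Theta (j : 'I_n)
  : {set {set 'rV[F]_k} * F * {set 'rV[F]_k}} :=
  [set e : {set 'rV[F]_k} * F * {set 'rV[F]_k} |
     [&& e.1.1 \in Talg_V G H Theta j,
         e.2 \in Talg_V G H Theta ((j.+1) %% n)%N &
         [exists u : 'rV[F]_k, (u \in e.1.1 :&: e.2) && ((u *m G) 0 j == e.1.2)]]].

Definition BCJR_V G H Theta (i : nat) : {set 'rV[F]_(n - k)} :=
  [set u *m Nmat G H Theta i | u : 'rV[F]_k].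
Definition BCJR_E G H Theta (j : 'I_n)
  : {set 'rV[F]_(n - k) * F * 'rV[F]_(n - k)} :=
  [set (u *m Nmat G H Theta j, (u *m G) 0 j, u *m Nmat G H Theta j.+1)
     | u : 'rV[F]_k].

End Trellis.

Definition tb_isomorphic (A B L : finType) (n : nat)
    (V1 : nat -> {set A}) (E1 : 'I_n -> {set A * L * A})
    (V2 : nat -> {set B}) (E2 : 'I_n -> {set B * L * B}) : Prop :=
  exists f : nat -> A -> B,
    (forall i, (i < n)%N -> {in V1 i &, injective (f i)} /\ f i @: V1 i = V2 i)
    /\ (forall j : 'I_n,
          [set (f j e.1.1, e.1.2, f ((j.+1) %% n)%N e.2) | e in E1 j] = E2 j).

(* The vertices of T_alg at level i are the cosets of ker(N_i), and all the
   elements u of such a coset have the same image u N_i.  Sending a coset to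
   this common value is a bijection onto the BCJR vertices {u N_i}; it maps
   the T_alg edge witnessed by u to the BCJR edge generated by u, once one
   knows that N_n = N_0 (because G H^T = 0). *)

From HB Require Import structures.
From mathcomp Require Import all_boot all_order all_algebra.
Set Implicit Arguments. Unset Strict Implicit. Unset Printing Implicit Defensive.
Import GRing.Theory.
Local Open Scope ring_scope.

Section Cosets.
Variables (F : finFieldType) (k n : nat) (M : 'M[F]_(k, n - k)).

Definition coset_image (S : {set 'rV[F]_k}) : 'rV[F]_(n - k) :=
  odflt 0 [pick x in S] *m M.

Lemma kcosetP u x : (x \in kcoset M u) = (x *m M == u *m M).
Proof.
apply/imsetP/eqP => [[y] | xM].
  by rewrite inE => /eqP yM ->; rewrite mulmxDl yM addr0.
exists (x - u); first by rewrite inE mulmxBl xM subrr.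
by rewrite addrC subrK.
Qed.

Lemma coset_image_kcoset u : coset_image (kcoset M u) = u *m M.
Proof.
rewrite /coset_image; case: pickP => [x | no_elt] /=.
  by rewrite kcosetP => /eqP.
by have := no_elt u; rewrite kcosetP eqxx.
Qed.

Lemma eq_kcoset u u' : u *m M = u' *m M -> kcoset M u = kcoset M u'.
Proof. by move=> uM; apply/setP => x; rewrite !kcosetP uM. Qed.

Lemma coset_image_inj : {in [set kcoset M u | u : 'rV_k] &, injective coset_image}.
Proof.
move=> _ _ /imsetP[u _ ->] /imsetP[u' _ ->].
by rewrite !coset_image_kcoset; apply: eq_kcoset.
Qed.

Lemma coset_image_cosets :
  coset_image @: [set kcoset M u | u : 'rV_k] = [set u *m M | u : 'rV_k].
Proof.
apply/setP => y; apply/imsetP/imsetP => [[_ /imsetP[u _ ->] ->] | [u _ ->]].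
  by exists u; rewrite ?coset_image_kcoset.
by exists (kcoset M u); rewrite ?coset_image_kcoset ?imset_f.
Qed.

End Cosets.

Section Trellises.
Variables (F : finFieldType) (k n : nat).
Variables (G : 'M[F]_(k, n)) (H : 'M[F]_(n - k, n)) (Theta : 'M[F]_(k, n - k)).
Hypothesis GHt0 : G *m H^T = 0.

Local Notation N := (Nmat G H Theta).

Lemma Nmat_n : N n = Theta.
Proof.
rewrite /Nmat (eq_bigl xpredT) => [|j]; last by rewrite ltn_ord.
suff -> : \sum_(j < n) col j G *m (col j H)^T = G *m H^T by rewrite GHt0 add0r.
apply/matrixP => a b; rewrite summxE !mxE; apply: eq_bigr => j _.
by rewrite !mxE big_ord1 !mxE.
Qed.

Lemma Nmat_modn i : (i <= n)%N -> N (i %% n) = N i.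
Proof.
rewrite leq_eqVlt => /predU1P[-> | lt_in]; last by rewrite modn_small.
by rewrite modnn Nmat_n /Nmat big_pred0 ?add0r.
Qed.

Lemma coset_image_edges (j : 'I_n) :
  [set (coset_image (N j) e.1.1, e.1.2, coset_image (N (j.+1 %% n)) e.2)
     | e in Talg_E G H Theta j] = BCJR_E G H Theta j.
Proof.
have Nj1 : N (j.+1 %% n) = N j.+1 by apply: Nmat_modn.
apply/setP => e; apply/imsetP/imsetP => [[[[v c] w]] | [u _ ->]].
  rewrite inE /= => /and3P[/imsetP[u1 _ ->] /imsetP[u2 _ ->]].
  case/existsP=> u /andP[]; rewrite inE !kcosetP => /andP[/eqP u1N /eqP u2N].
  move=> /eqP <- ->; exists u => //.
  by rewrite !coset_image_kcoset -u1N -u2N Nj1.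
exists (kcoset (N j) u, (u *m G) 0 j, kcoset (N (j.+1 %% n)) u).
  rewrite inE /= !imset_f //=; apply/existsP; exists u.
  by rewrite inE !kcosetP !eqxx.
by rewrite /= !coset_image_kcoset Nj1.
Qed.

End Trellises.

Theorem proposition1 (F : finFieldType) (k n : nat)
  (G : 'M[F]_(k, n)) (H : 'M[F]_(n - k, n))
  (spans : 'I_k -> 'I_n * 'I_n) :
  \rank G = k ->
  \rank H = (n - k)%N ->
  G *m H^T = 0 ->
  (forall l : 'I_k, is_span (row l G) (spans l)) ->
  let Theta := disp_matrix G H spans in
  tb_isomorphic (Talg_V G H Theta) (Talg_E G H Theta)
                  (BCJR_V G H Theta) (BCJR_E G H Theta).
Proof.
move=> _ _ GHt0 _ Theta.
exists (fun i => coset_image (Nmat G H Theta i)); split.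
  by move=> i _; split; [apply: coset_image_inj | apply: coset_image_cosets].
exact: coset_image_edges.
Qed.
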